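(* Let $G$ be a locally compact abelian group, $X$ a locally convex topological vector space over $\mathbf{C}$, $n\in\mathbf{Z}_+$, and $H$ a closed subgroup of $G$ such that $G/H$ is a torsion group. Then: (a) the restriction map $r:P^n(G,X)\to P^n(H,X)$, $p\mapsto p|_H$, is one-to-one, so $\dim P^n(G,X)\le\dim P^n(H,X)$; (b) if moreover $G/H$ is of bounded order and $P^n(H)$ is finite dimensional, then $r:P^n(G,X)\to P^n(H,X)$ is a linear isomorphism.
   Context: $\mathbf{Z}_+=\{0,1,2,\dots\}$. A group is torsion if every element has finite order, and of bounded order if the orders of its elements are bounded. For an abelian topological group $S$, a continuous $p:S\to X$ is a polynomial of degree at most $n$ if for all $s,t\in S$ the map $m\mapsto p(s+mt)$, $m\in\mathbf{Z}_+$, is a polynomial in $m$ of degree at most $n$ with coefficients in $X$; $P^n(S,X)$ is the space of these and $P^n(S)=P^n(S,\mathbf{C})$. *)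

From HB Require Import structures.
From mathcomp Require Import all_boot all_order all_algebra.
From mathcomp Require Import all_classical all_reals all_analysis.
From mathcomp.real_closed Require Import complex.
Set Implicit Arguments. Unset Strict Implicit. Unset Printing Implicit Defensive.
Import Order.TTheory GRing.Theory Num.Theory.
Local Open Scope classical_set_scope.
Local Open Scope ring_scope.

Definition is_subgroup (G : zmodType) (H : set G) : Prop :=
  H 0 /\ (forall x y, H x -> H y -> H (x - y)).

Definition quotient_torsion (G : zmodType) (H : set G) : Prop :=
  forall g : G, exists k : nat, (0 < k)%N /\ H (g *+ k).

Definition quotient_bounded_order (G : zmodType) (H : set G) : Prop :=
  exists N : nat, forall g : G, exists k : nat, (0 < k <= N)%N /\ H (g *+ k).

Definition poly_along (G : zmodType) (K : numDomainType) (X : lmodType K)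
  (n : nat) (p : G -> X) (s t : G) : Prop :=
  exists a : 'I_n.+1 -> X,
    forall m : nat, p (s + t *+ m) = \sum_(k < n.+1) ((m%:R : K) ^+ k) *: a k.

Definition is_poly (G : topologicalZmodType) (K : numDomainType) (X : tvsType K)
  (n : nat) (p : G -> X) : Prop :=
  continuous p /\ forall s t : G, poly_along n p s t.

(* the restriction of p to the subgroup H (with the subspace topology) lies in
   P^n(H, X); elements of P^n(H,X) are represented by functions on G, only their
   values on H matter *)
Definition is_poly_on (G : topologicalZmodType) (K : numDomainType) (X : tvsType K)
  (H : set G) (n : nat) (p : G -> X) : Prop :=
  {within H, continuous p} /\ forall s t : G, H s -> H t -> poly_along n p s t.

(* P^n(H) = P^n(H, K) is finite dimensional: finitely many elements of P^n(H)
   span it (as functions on H) *)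
Definition Pn_on_findim (G : topologicalZmodType) (K : numFieldType)
  (H : set G) (n : nat) : Prop :=
  exists (d : nat) (b : 'I_d -> G -> K^o),
    (forall i, is_poly_on H n (b i)) /\
    forall q : G -> K^o, is_poly_on H n q ->
      exists c : 'I_d -> K, forall h, H h -> q h = \sum_(i < d) c i * b i h.

From HB Require Import structures.
From mathcomp Require Import all_boot all_order all_algebra.
From mathcomp Require Import all_classical all_reals all_analysis.
From mathcomp.real_closed Require Import complex.
Set Implicit Arguments. Unset Strict Implicit. Unset Printing Implicit Defensive.
Import Order.TTheory GRing.Theory Num.Theory.
Local Open Scope classical_set_scope.
Local Open Scope ring_scope.

(* A polynomial of degree at most n is determined by its values at n+1 distinct
   nodes, so there are universal weights recovering m |-> p (s + t *+ m) at
   m = 1 from its values at m = 0, M, ..., n M.  If t *+ M lies in H, those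
   values only involve H: this gives injectivity of the restriction.  If
   g *+ M lies in H for every g, the same weights applied to q on H define an
   extension of q to G. *)

Lemma lagrange_weights (K : fieldType) (n : nat) (x : nat -> K) (y : K) :
  injective x -> exists c : 'I_n.+1 -> K,
    forall k : 'I_n.+1, \sum_(i < n.+1) c i * x i ^+ k = y ^+ k.
Proof.
move=> x_inj.
exists (fun i => (tnth (@lagrange K n.+1 x) i).[y]) => k.
have := @lagrange_gen K n.+1 x (ltn0Sn n) x_inj 'X^k.
rewrite size_polyXn ltn_ord => /(_ isT) /(congr1 (horner^~ y)).
rewrite hornerXn horner_sum => ->; apply: eq_bigr => i _.
by rewrite hornerM hornerC hornerXn mulrC.
Qed.

Lemma lagrange_weights_eval (K : fieldType) (X : lmodType K) (n : nat)
    (x : nat -> K) (y : K) (c : 'I_n.+1 -> K) (a : 'I_n.+1 -> X) :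
  (forall k : 'I_n.+1, \sum_(i < n.+1) c i * x i ^+ k = y ^+ k) ->
  \sum_(i < n.+1) c i *: \sum_(k < n.+1) x i ^+ k *: a k
    = \sum_(k < n.+1) y ^+ k *: a k.
Proof.
move=> cE; under eq_bigr => i _ do rewrite scaler_sumr.
rewrite exchange_big; apply: eq_bigr => k _.
by rewrite -cE scaler_suml; apply: eq_bigr => i _; rewrite scalerA.
Qed.

Lemma poly_along_extrapolation (K : numFieldType) (n M : nat) :
  (0 < M)%N -> exists c : 'I_n.+1 -> K,
    forall (G : zmodType) (X : lmodType K) (p : G -> X) (s t : G),
      poly_along n p s t ->
      p (s + t) = \sum_(i < n.+1) c i *: p (s + t *+ (i * M)).
Proof.
move=> M_gt0.
pose nodes i : K := (i * M)%:R.
have nodes_inj : injective nodes.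
  by move=> i j /eqP; rewrite eqr_nat eqn_pmul2r // => /eqP.
have [c cE] := lagrange_weights n 1 nodes_inj.
exists c => G X p s t [a pE].
rewrite -[t in LHS]mulr1n pE mulr1n -(lagrange_weights_eval a cE).
by apply: eq_bigr => i _; rewrite pE.
Qed.

Lemma poly_along_natmul (G : zmodType) (K : numDomainType) (X : lmodType K)
    (n k : nat) (p : G -> X) (s t : G) :
  poly_along n p (s *+ k) (t *+ k) -> poly_along n (fun g => p (g *+ k)) s t.
Proof.
by move=> [a pE]; exists a => m; rewrite mulrnDl -mulrnA mulnC mulrnA pE.
Qed.

Lemma poly_along_lincomb (G : zmodType) (K : numDomainType) (X : lmodType K)
    (n d : nat) (c : 'I_d -> K) (f : 'I_d -> G -> X) (s t : G) :
  (forall i, poly_along n (f i) s t) ->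
  poly_along n (fun g => \sum_(i < d) c i *: f i g) s t.
Proof.
move=> /choice[a fE]; exists (fun k => \sum_(i < d) c i *: a i k) => m.
under eq_bigr => i _ do rewrite fE scaler_sumr.
rewrite exchange_big; apply: eq_bigr => k _.
by rewrite scaler_sumr; apply: eq_bigr => i _; rewrite !scalerA mulrC.
Qed.

Lemma subgroup_natmul (G : zmodType) (H : set G) (g : G) (k : nat) :
  is_subgroup H -> H g -> H (g *+ k).
Proof.
move=> [H0 HB] Hg; elim: k => [|k IH]; first by rewrite mulr0n.
rewrite mulrS -[g *+ k]opprK; apply: (HB) => //.
by rewrite -sub0r; apply: HB.
Qed.

Lemma bounded_order_uniform_exponent (G : zmodType) (H : set G) :
  is_subgroup H -> quotient_bounded_order H ->
  exists M : nat, (0 < M)%N /\ forall g, H (g *+ M).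
Proof.
move=> Hsub [N HN]; exists N`!; split=> [|g]; first exact: fact_gt0.
have [k [/andP[k_gt0 k_le] Hk]] := HN g.
have /dvdnP[d ->] : (k %| N`!)%N by apply: dvdn_fact; rewrite k_gt0.
by rewrite mulnC mulrnA; apply: subgroup_natmul.
Qed.

Lemma continuous_natmul (G : topologicalZmodType) (k : nat) :
  continuous (fun g : G => g *+ k).
Proof.
have -> : (fun g : G => g *+ k) = fun g => \sum_(i < k) g.
  by apply: funext => g; rewrite sumr_const card_ord.
apply: continuous_big => [|i _ x]; first exact: add_continuous.
exact: cvg_id.
Qed.

Lemma continuous_scaler (T : topologicalType) (K : numFieldType)
    (E : topologicalLmodType K) (c : K) (f : T -> E) :
  continuous f -> continuous (fun x => c *: f x).
Proof.
move=> f_cont x.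
apply: (@continuous_comp _ _ _ (fun y => (c : K^o, f y)) (fun z : K^o * E => z.1 *: z.2)).
  exact: cvg_pair (cvg_cst _) (f_cont x).
exact: scale_continuous.
Qed.

Lemma within_continuous_comp (T U : topologicalType) (A : set T)
    (f : T -> U) (phi : T -> T) :
  {within A, continuous f} -> continuous phi -> (forall x, A (phi x)) ->
  continuous (f \o phi).
Proof.
move=> /subspace_continuousP f_cont phi_cont phiA x W /= /(f_cont _ (phiA x)).
rewrite /within /= => /(phi_cont x); rewrite nbhs_simpl /= => WA.
by apply: filterS WA => y /= /(_ (phiA y)).
Qed.

Lemma poly_eq_of_eq_on_subgroup (G : zmodType) (K : numFieldType) (X : lmodType K)
    (n : nat) (H : set G) (p1 p2 : G -> X) :
  is_subgroup H -> quotient_torsion H ->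
  (forall s t, poly_along n p1 s t) -> (forall s t, poly_along n p2 s t) ->
  (forall h, H h -> p1 h = p2 h) -> p1 = p2.
Proof.
move=> Hsub tors p1_poly p2_poly p12; apply: funext => g.
have [M [M_gt0 HgM]] := tors g.
have [c cE] := @poly_along_extrapolation K n M M_gt0.
rewrite -[g]add0r !(cE _ _ _ 0 g) //; apply: eq_bigr => i _.
by rewrite add0r p12 // mulnC mulrnA; apply: subgroup_natmul.
Qed.

Lemma poly_extension_of_uniform_exponent (G : topologicalZmodType) (K : numFieldType)
    (X : tvsType K) (n M : nat) (H : set G) (q : G -> X) :
  is_subgroup H -> (0 < M)%N -> (forall g, H (g *+ M)) -> is_poly_on H n q ->
  exists p : G -> X, is_poly n p /\ forall h, H h -> p h = q h.
Proof.
move=> Hsub M_gt0 HM [q_cont q_poly].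
have [c cE] := @poly_along_extrapolation K n M M_gt0.
have HiM g (i : nat) : H (g *+ (i * M)) by rewrite mulrnA; apply: HM.
exists (fun g => \sum_(i < n.+1) c i *: q (g *+ (i * M))); split=> [|h Hh].
  split=> [|s t].
    apply: continuous_big => [|i _]; first exact: add_continuous.
    apply/continuous_scaler/(within_continuous_comp q_cont) => //.
    exact: continuous_natmul.
  by apply: poly_along_lincomb => i; apply/poly_along_natmul/q_poly.
have := cE _ _ q 0 h (q_poly _ _ Hsub.1 Hh); rewrite add0r => ->.
by apply: eq_bigr => i _; rewrite add0r.
Qed.

Theorem lemma3p3 (R : realType) (G : topologicalZmodType) (X : tvsType R[i])
  (n : nat) (H : set G) :
  hausdorff_space G -> locally_compact [set: G] ->
  is_subgroup H -> closed H -> quotient_torsion H ->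
  (forall p1 p2 : G -> X, is_poly n p1 -> is_poly n p2 ->
     (forall h, H h -> p1 h = p2 h) -> p1 = p2) /\
  (quotient_bounded_order H -> Pn_on_findim R[i] H n ->
     forall q : G -> X, is_poly_on H n q ->
       exists p : G -> X, is_poly n p /\ forall h, H h -> p h = q h).
Proof.
move=> _ _ Hsub _ tors; split.
  move=> p1 p2 [_ p1_poly] [_ p2_poly].
  exact: poly_eq_of_eq_on_subgroup Hsub tors p1_poly p2_poly.
move=> /(bounded_order_uniform_exponent Hsub) [M [M_gt0 HM]] _ q.
exact: poly_extension_of_uniform_exponent Hsub M_gt0 HM.
Qed.
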